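(* Let $H$ be a hypergraph with $R(H)=\{1,2\}$ such that the graph $H^2$ of its $2$-edges is bipartite and $H$ contains $K_2^{\{1,2\}}$ as a subgraph. Then $\pi(H)=\frac54$.
   Context: A hypergraph $H=(V,E)$ has finite vertex set $V$ and edge set $E\subseteq 2^V$; $R(H)=\{|F|:F\in E\}$. $H_1\subseteq H_2$ (subgraph) means there is an injective $f\colon V(H_1)\to V(H_2)$ with $f(F)\in E(H_2)$ for all $F\in E(H_1)$. For $G$ on $n$ vertices, $h_n(G)=\sum_{F\in E(G)}1/\binom{n}{|F|}$; $\pi_n(H)=\max\{h_n(G): G\text{ on } n \text{ vertices}, R(G)\subseteq R(H), H\not\subseteq G\}$ and $\pi(H)=\lim_n\pi_n(H)$. $K_2^{\{1,2\}}$ is the hypergraph on vertices $\{1,2\}$ with edges $\{1\},\{2\},\{1,2\}$. *)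

From HB Require Import structures.
From mathcomp Require Import all_boot all_order all_algebra.
From mathcomp Require Import all_classical all_reals all_analysis.
Set Implicit Arguments. Unset Strict Implicit. Unset Printing Implicit Defensive.
Import Order.TTheory GRing.Theory Num.Theory.
Local Open Scope ring_scope.

Definition subgraphb (V1 V2 : finType) (E1 : {set {set V1}}) (E2 : {set {set V2}}) : bool :=
  [exists f : {ffun V1 -> V2}, injectiveb f && [forall F in E1, (f @: F) \in E2]].

Definition in_R (V : finType) (E : {set {set V}}) (k : nat) : bool :=
  [exists F in E, #|F| == k].

Definition R_sub (V1 V2 : finType) (E1 : {set {set V1}}) (E2 : {set {set V2}}) : bool :=
  [forall F in E1, in_R E2 #|F|].

Definition h_n (R : realType) (n : nat) (G : {set {set 'I_n}}) : R :=
  \sum_(F in G) ('C(n, #|F|)%:R)^-1.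

(* π_n(H): max of h_n(G) over hypergraphs G on n vertices with R(G) ⊆ R(H)
   and H not a subgraph of G (the empty hypergraph is always admissible when
   H has an edge; h_n >= 0, so using 0 as the neutral element is harmless). *)
Definition pi_n (R : realType) (V : finType) (E : {set {set V}}) (n : nat) : R :=
  \big[Num.max/0]_(G : {set {set 'I_n}} | R_sub G E && ~~ subgraphb E G) h_n R G.

Definition K2_12 : {set {set 'I_2}} :=
  [set [set ord0]; [set ord_max]; finset.setT].

Definition two_graph_bipartite (V : finType) (E : {set {set V}}) : Prop :=
  exists A : {set V}, forall F, F \in E -> #|F| = 2%N -> #|F :&: A| = 1%N.

From mathcomp Require Import all_boot all_order all_algebra.
From mathcomp Require Import all_classical all_reals all_analysis.
From mathcomp Require Import zify ring lra.
(* Re-imported so that the finset lemmas (setIidPl, subsetP, ...) shadow their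
   classical_sets namesakes. *)
From mathcomp Require Import fintype finset.
Set Implicit Arguments. Unset Strict Implicit. Unset Printing Implicit Defensive.
Import Order.TTheory GRing.Theory Num.Theory.
Import numFieldNormedType.Exports.

(* Lower bound: put singletons on half of the n vertices and take every pair not
   inside that half.  No pair joins two singletons, so K_2^{1,2}, and hence H,
   does not embed, while the density is at least 5/4.

   Upper bound: if h_n(G) > 5/4 + 1/m, counting shows that at least n^2/(4m)
   pairs of G have both endpoints among its singletons.  By the double counting
   of Kovari-Sos-Turan these pairs contain a complete bipartite graph K_{t,t}
   with t = |V(H)|, and H maps into it: its vertices go to the side given by the
   bipartition of H^2, so every 2-edge crosses and every vertex is a singleton. *)
Local Open Scope nat_scope.

Lemma ffact_leq_exp n t : n ^_ t <= n ^ t.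
Proof.
have -> : n ^ t = \prod_(i < t) n by rewrite prod_nat_const card_ord.
by rewrite ffact_prod; apply: leq_prod => i _; apply: leq_subr.
Qed.

Lemma expB_leq_ffact n t : (n - t) ^ t <= n ^_ t.
Proof.
have -> : (n - t) ^ t = \prod_(i < t) (n - t) by rewrite prod_nat_const card_ord.
by rewrite ffact_prod; apply: leq_prod => i _; apply: leq_sub2l; apply: ltnW.
Qed.

(* Once n / 2k exceeds t plus this bound, n <= 2k (t + 2) (n / 2k - t), which
   reduces the binomial comparison below to a comparison with kst_bound. *)
Definition kst_bound k t := 2 * k * t.-1 * (2 * k * (t + 2)) ^ t.-1.

Lemma kst_count_ltn k t h n : 0 < k -> 0 < t -> n <= 2 * k * h ->
  2 * k * (kst_bound k t + t + 1) <= n ->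
  t.-1 * 'C(n, t) < h * 'C(n %/ (2 * k), t).
Proof.
case: t => // t k0 _ n_le_h n_large; rewrite /kst_bound /= in n_large *.
set d := n %/ (2 * k); set D := d - t.+1; set c := 2 * k * (t.+1 + 2).
have d_large : (2 * k * t * c ^ t) + t.+1 + 1 <= d.
  by rewrite /d leq_divRL ?muln_gt0 // mulnC.
have n_le_D : n <= c * D.
  have : n < d.+1 * (2 * k) by apply: ltn_ceil; rewrite muln_gt0.
  rewrite /c /D; nia.
rewrite -(ltn_pmul2r (fact_gt0 t.+1)) -!mulnA !bin_ffact.
apply: (leq_ltn_trans (leq_mul (leqnn t) (ffact_leq_exp n t.+1))).
apply: (leq_trans _ (leq_mul (leqnn h) (expB_leq_ffact d t.+1))).
have n_exp : n ^ t <= c ^ t * D ^ t.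
  by rewrite -expnMn; have [->|t0] := posnP t; rewrite ?expn0 // leq_exp2r.
have M_lt_D : 2 * k * t * c ^ t < D by rewrite /D; lia.
have h_gt0 : 0 < h by nia.
have Dt_gt0 : 0 < D ^ t by rewrite expn_gt0; lia.
have tn_le : t * n <= h * (2 * k * t) by nia.
rewrite !expnS -/D mulnA; apply: (leq_ltn_trans (leq_mul tn_le n_exp)).
by rewrite -mulnA ltn_pmul2l // mulnA ltn_pmul2r.
Qed.

Lemma sum_nat_of_bool_card (I : finType) (P Q : pred I) :
  \sum_(i | P i) (Q i : nat) = #|[set i | P i && Q i]|.
Proof.
rewrite -sum1dep_card big_mkcondr /=; apply: eq_bigr => i _.
by case: (Q i).
Qed.

Lemma many_large_values (T : finType) (f : T -> nat) k :
  (forall v, f v <= #|T|) -> #|T| * #|T| <= k * \sum_v f v ->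
  #|T| <= 2 * k * #|[set v | #|T| <= 2 * k * f v]|.
Proof.
move=> f_le sum_ge; set n := #|T| in f_le sum_ge *; set L := [set v | _].
have sum_L : \sum_(v in L) f v <= #|L| * n.
  by rewrite -sum_nat_const; apply: leq_sum.
have sum_notL : 2 * k * \sum_(v | v \notin L) f v <= n * n.
  rewrite big_distrr /=; apply: (@leq_trans (\sum_(v | v \notin L) n)).
    by apply: leq_sum => v; rewrite inE -ltnNge; apply: ltnW.
  by rewrite sum_nat_cond_const leq_mul2r max_card orbT.
rewrite (bigID (mem L)) /= in sum_ge.
have : n * n <= 2 * k * #|L| * n by nia.
by have [->|n_gt0] := posnP n; last rewrite leq_pmul2r.
Qed.

Lemma sum_card_common_nbhd (T : finType) (adj : rel T) t :
  \sum_(X : {set T} | #|X| == t) #|[set v | X \subset [set u | adj v u]]|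
  = \sum_v 'C(#|[set u | adj v u]|, t).
Proof.
transitivity (\sum_(X : {set T} | #|X| == t)
                \sum_v ((X \subset [set u | adj v u]) : nat)).
  by apply: eq_bigr => X _; rewrite sum_nat_of_bool_card; apply: eq_card => v; rewrite !inE.
rewrite exchange_big /=; apply: eq_bigr => v _.
by rewrite sum_nat_of_bool_card -cards_draws; apply: eq_card => X; rewrite !inE andbC.
Qed.

(* Count the pairs (X, v) with X a t-subset of the neighbourhood of v: the
   vertices of degree at least n / 2k alone yield more than (t - 1) C(n, t) of
   them, so some t-set has t common neighbours. *)
Lemma dense_rel_complete_bipartite (T : finType) (adj : rel T) k t :
  0 < k -> 0 < t -> 2 * k * (kst_bound k t + t + 1) <= #|T| ->
  #|T| * #|T| <= k * \sum_v #|[set u | adj v u]| ->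
  exists X Y : {set T}, [/\ #|X| = t, t <= #|Y| & {in Y & X, forall y x, adj y x}].
Proof.
move=> k_gt0 t_gt0 T_large dense.
set N := fun v => [set u | adj v u].
have twok_gt0 : 0 < 2 * k by rewrite muln_gt0.
have many_high := many_large_values (fun v => max_card (N v)) dense.
set L := [set v | _] in many_high.
have := kst_count_ltn k_gt0 t_gt0 many_high T_large.
have [/existsP [X /andP [/eqP X_t Y_t]] _ | /existsPn none] :=
  boolP [exists X : {set T}, (#|X| == t) && (t <= #|[set v | X \subset N v]|)].
  exists X, [set v | X \subset N v]; split=> // y x.
  by rewrite inE => /subsetP X_sub /X_sub; rewrite inE.
rewrite ltnNge => /negP []; apply: (@leq_trans (\sum_v 'C(#|N v|, t))).
  rewrite (bigID (mem L)) /= -sum_nat_const (leq_trans _ (leq_addr _ _)) //.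
  apply: leq_sum => v; rewrite inE => v_high; apply: leq_bin2l.
  by rewrite -(mulKn #|N v| twok_gt0) leq_div2r.
rewrite -sum_card_common_nbhd -card_draws mulnC -sum_nat_cond_const.
apply: leq_sum => X X_t; move/(_ X): none; rewrite X_t /= -ltnNge.
by move=> lt_t; rewrite -ltnS prednK.
Qed.

Section PairHypergraph.
Variables (W : finType) (G : {set {set W}}).

Definition singletons := [set v | [set v] \in G].
Definition pair_edges := [set F in G | #|F| == 2].
Definition inner_pairs := [set F in pair_edges | F \subset singletons].

Lemma card_pair_edges :
  #|pair_edges| + 'C(#|singletons|, 2) <= #|inner_pairs| + 'C(#|W|, 2).
Proof.
set K2 := [set F : {set W} | #|F| == 2]; set KS := [set F in K2 | F \subset singletons].
have inner_sub : inner_pairs \subset pair_edges.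
  by apply/subsetP => F; rewrite inE => /andP [].
have KS_sub : KS \subset K2 by apply/subsetP => F; rewrite inE => /andP [].
have outer_sub : pair_edges :\: inner_pairs \subset K2 :\: KS.
  apply/subsetP => F; rewrite !inE.
  by case: (F \in G); case: (#|F| == 2); case: (F \subset singletons).
have card_KS : #|KS| = 'C(#|singletons|, 2).
  by rewrite -cards_draws; apply: eq_card => F; rewrite !inE andbC.
rewrite -card_KS -(card_draws _ 2) -/K2.
rewrite -(cardsID inner_pairs pair_edges) (setIidPr inner_sub).
rewrite -(cardsID KS K2) (setIidPr KS_sub).
by rewrite -addnA leq_add2l addnC leq_add2l subset_leq_card.
Qed.

Lemma card_singleton_edges : #|[set F in G | #|F| == 1]| = #|singletons|.
Proof.
rewrite -(card_imset singletons set1_inj); apply: eq_card => F; rewrite inE.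
apply/andP/imsetP => [[F_G /cards1P [v F_v]] | [v v_S ->]].
  by exists v; rewrite // inE -F_v.
by rewrite inE in v_S; rewrite v_S cards1.
Qed.

Lemma card_inner_pairs_le_deg :
  #|inner_pairs| <= \sum_v #|[set u | [set v; u] \in inner_pairs]|.
Proof.
set P := [set p : W * W | [set p.1; p.2] \in inner_pairs].
have -> : \sum_v #|[set u | [set v; u] \in inner_pairs]| = #|P|.
  transitivity (\sum_v \sum_u (([set v; u] \in inner_pairs) : nat)).
    by apply: eq_bigr => v _; rewrite sum_nat_of_bool_card; apply: eq_card => u; rewrite !inE.
  by rewrite pair_big /= sum_nat_of_bool_card; apply: eq_card => p; rewrite !inE.
apply: leq_trans (leq_imset_card (fun p => [set p.1; p.2]) P).
apply/subset_leq_card/subsetP => F F_in; have := F_in.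
rewrite !inE => /andP [/andP [_ /cards2P [x [y [_ F_xy]]]] _].
by apply/imsetP; exists (x, y); rewrite // inE -F_xy.
Qed.

Lemma inner_pairs_sub : inner_pairs \subset G.
Proof. by apply/subsetP => F; rewrite !inE => /andP [/andP []]. Qed.

Lemma inner_pair_neq v : [set v; v] \notin inner_pairs.
Proof. by rewrite !inE setUid cards1 andbF. Qed.

Lemma inner_pair_singletons y x :
  [set y; x] \in inner_pairs -> (y \in singletons) && (x \in singletons).
Proof. by rewrite inE subUset !sub1set => /andP []. Qed.

End PairHypergraph.

Lemma inj_into_set (V T : finType) (X : {set T}) :
  #|V| <= #|X| -> exists2 g : V -> T, injective g & forall v, g v \in X.
Proof.
move=> V_le_X; exists (fun v => enum_val (widen_ord V_le_X (enum_rank v))).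
  by move=> u w /enum_val_inj /(congr1 val) /= /val_inj /enum_rank_inj.
by move=> v; apply: enum_valP.
Qed.

Lemma crossing_pair (T : finType) (A : {set T}) (u w : T) :
  u != w -> #|[set u; w] :&: A| = 1 -> (u \in A) != (w \in A).
Proof.
move=> uw; case uA: (u \in A); case wA: (w \in A) => //=.
  by rewrite (setIidPl _) ?cards2 ?uw // subUset !sub1set uA wA.
move=> /eqP; rewrite eqn_leq => /andP [_ /card_gt0P [x]].
by rewrite !inE => /andP [/orP [] /eqP ->]; rewrite ?uA ?wA.
Qed.

Lemma subgraph_of_complete_bipartite (V W : finType) (E : {set {set V}})
    (G : {set {set W}}) (A : {set V}) (X Y : {set W}) :
  (forall F, F \in E -> #|F| = 1 \/ #|F| = 2) ->
  (forall F, F \in E -> #|F| = 2 -> #|F :&: A| = 1) ->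
  #|V| <= #|X| -> #|V| <= #|Y| -> [disjoint X & Y] ->
  {in Y & X, forall y x, [set y; x] \in G} ->
  {subset X :|: Y <= singletons G} ->
  subgraphb E G.
Proof.
move=> E_sizes E_cross V_le_X V_le_Y XY_disj XY_edges XY_single.
have [gX gX_inj gX_in] := inj_into_set V_le_X.
have [gY gY_inj gY_in] := inj_into_set V_le_Y.
pose f v := if v \in A then gX v else gY v.
have f_XY v : f v \in X :|: Y by rewrite /f inE; case: ifP; rewrite ?gX_in ?gY_in ?orbT.
apply/existsP; exists [ffun v => f v]; apply/andP; split.
  apply/injectiveP => u w; rewrite !ffunE /f.
  case: ifP => _; case: ifP => _; [exact: gX_inj | | | exact: gY_inj] => e.
    by have := disjointFr XY_disj (gX_in u); rewrite e gY_in.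
  by have := disjointFr XY_disj (gX_in w); rewrite -e gY_in.
apply/forallP => F; apply/implyP => F_E.
have [/eqP/cards1P [v ->] | F_2] := E_sizes F F_E.
  by rewrite imset_set1 ffunE; have := XY_single _ (f_XY v); rewrite inE.
have := E_cross F F_E F_2; move/eqP/cards2P: F_2 => [u [w [uw ->]]] /(crossing_pair uw).
rewrite imsetU1 imset_set1 !ffunE /f; case: ifP => _; case: ifP => //= _ _.
  by rewrite setUC; apply: XY_edges.
by apply: XY_edges.
Qed.

Local Open Scope ring_scope.

Lemma natr_bin2 (R : numFieldType) n : 'C(n, 2)%:R = n%:R * (n%:R - 1) / 2 :> R.
Proof.
elim: n => [|n IH]; first by rewrite bin0n !mul0r.
by rewrite binS bin1 natrD IH -addn1 natrD; field.
Qed.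

Lemma h_n_pair_hypergraph (R : realType) n (G : {set {set 'I_n}}) :
  (forall F, F \in G -> #|F| = 1%N \/ #|F| = 2%N) ->
  h_n R G = #|singletons G|%:R / n%:R + #|pair_edges G|%:R / 'C(n, 2)%:R.
Proof.
move=> G_sizes; rewrite /h_n (bigID (fun F : {set 'I_n} => #|F| == 1%N)) /=.
congr (_ + _).
  rewrite -card_singleton_edges -sum1_card natr_sum mulr_suml.
  apply: eq_big => [F|F /andP [_ /eqP ->]]; first by rewrite in_set.
  by rewrite bin1 mul1r.
rewrite -sum1_card natr_sum mulr_suml; apply: eq_big => [F|F].
  by rewrite /pair_edges in_set; case: (boolP (F \in G)) => //= /G_sizes [] ->.
move=> /andP [F_G F_not1]; have [F_1|->] := G_sizes F F_G; last by rewrite mul1r.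
by rewrite F_1 in F_not1.
Qed.

(* s/n - C(s,2)/C(n,2) is at most about 1/4 (attained near s = n/2), so the
   excess density over 5/4 has to come from the q pairs inside the singletons. *)
Lemma many_inner_pairs_real (R : realFieldType) (n s p q m : R) :
  1 <= m -> m + 2 <= n -> 0 <= s <= n -> 0 <= p ->
  p + s * (s - 1) / 2 <= q + n * (n - 1) / 2 ->
  5 / 4 + m^-1 < s / n + p / (n * (n - 1) / 2) ->
  n ^+ 2 <= 4 * m * q.
Proof.
move=> m_ge1 n_ge /andP [s_ge0 s_le] p_ge0 count dense.
have n_gt0 : 0 < n by lra.
have bin_gt0 : 0 < n * (n - 1) / 2 by apply: divr_gt0 => //; nra.
have mVm : m * m^-1 = 1 by rewrite mulfV //; lra.
have mV_gt0 : 0 < m^-1 by rewrite invr_gt0; lra.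
have {}dense : (5 / 4 + m^-1) * (n * (n - 1) / 2) < s * (n - 1) / 2 + p.
  move: dense; rewrite -(ltr_pM2r bin_gt0).
  suff -> : (s / n + p / (n * (n - 1) / 2)) * (n * (n - 1) / 2) = s * (n - 1) / 2 + p by [].
  by field; lra.
have q_ge : 2 * q >= (n / 2 - s) ^+ 2 - n / 4 + (n ^+ 2 - n) * m^-1 by nra.
have : 4 * m * q >= 2 * m * (n / 2 - s) ^+ 2 - m * n / 2 + 2 * (n ^+ 2 - n) * (m * m^-1).
  by nra.
rewrite mVm.
have : 0 <= 2 * m * (n / 2 - s) ^+ 2 by apply: mulr_ge0; [lra | apply: sqr_ge0].
have : 0 <= n * (n - 2 - m / 2) by apply: mulr_ge0; lra.
nra.
Qed.

Lemma half_split_density (R : realFieldType) (n s : R) :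
  2 <= n -> 0 <= s -> (n - 2 * s) * (n - 2 * s - 1) = 0 ->
  5 / 4 <= s / n + (n * (n - 1) / 2 - s * (s - 1) / 2) / (n * (n - 1) / 2).
Proof.
move=> n_ge2 s_ge0 s_half.
have nn_gt0 : 0 < n * (n - 1) by nra.
have -> : s / n + (n * (n - 1) / 2 - s * (s - 1) / 2) / (n * (n - 1) / 2)
  = (s * (n - 1) + n * (n - 1) - s * (s - 1)) / (n * (n - 1)).
  by field; nra.
by rewrite ler_pdivlMr //; nra.
Qed.

Local Open Scope nat_scope.

Lemma subgraphb_trans (V1 V2 V3 : finType) (E1 : {set {set V1}})
    (E2 : {set {set V2}}) (E3 : {set {set V3}}) :
  subgraphb E1 E2 -> subgraphb E2 E3 -> subgraphb E1 E3.
Proof.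
move=> /existsP [g /andP [/injectiveP g_inj /forallP gE]].
move=> /existsP [f /andP [/injectiveP f_inj /forallP fE]].
apply/existsP; exists [ffun v => f (g v)]; apply/andP; split.
  by apply/injectiveP => u w; rewrite !ffunE => /f_inj /g_inj.
apply/forallP => F; apply/implyP => F_E1.
have -> : [ffun v => f (g v)] @: F = f @: (g @: F).
  by rewrite -imset_comp; apply: eq_imset => v; rewrite ffunE.
exact: (implyP (fE _) (implyP (gE _) F_E1)).
Qed.

Lemma half_leq_n n : n./2 <= n.
Proof. by rewrite leq_half_double -addnn -addnS leq_addr. Qed.

Definition lower_half n : {set 'I_n} := [set widen_ord (half_leq_n n) i | i in 'I_n./2].

Definition half_graph n : {set {set 'I_n}} :=
  [set [set v] | v in lower_half n] :|:
  [set F : {set 'I_n} | (#|F| == 2) && ~~ (F \subset lower_half n)].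

Lemma card_lower_half n : #|lower_half n| = n./2.
Proof. by rewrite card_imset ?card_ord // => i j /(congr1 val) /= /val_inj. Qed.

Lemma half_graph_sizes n F : F \in half_graph n -> #|F| = 1 \/ #|F| = 2.
Proof.
rewrite inE => /orP [/imsetP [v _ ->] | ]; first by left; rewrite cards1.
by rewrite inE => /andP [/eqP -> _]; right.
Qed.

Lemma singletons_half_graph n : singletons (half_graph n) = lower_half n.
Proof.
apply/setP => v; rewrite inE !in_setU in_set cards1 orbF.
by apply/imsetP/idP => [[u u_half /set1_inj ->] | v_half]; last exists v.
Qed.

Lemma card_pair_edges_half_graph n :
  #|pair_edges (half_graph n)| = 'C(n, 2) - 'C(n./2, 2).
Proof.
have -> : pair_edges (half_graph n) =
    [set F : {set 'I_n} | #|F| == 2] :\: [set F : {set 'I_n} | F \subset lower_half n].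
  apply/setP => F; rewrite /pair_edges !inE.
  case F_2: (#|F| == 2); rewrite ?andbF ?andbT //= orbC.
  have [/imsetP [v _ F_v] | _] := boolP (F \in [set [set v] | v in lower_half n]).
    by rewrite F_v cards1 in F_2.
  by rewrite orbF.
rewrite cardsD card_draws card_ord -card_lower_half -cards_draws.
by congr (_ - _); apply: eq_card => F; rewrite !inE andbC.
Qed.

Lemma half_graph_K2_free n : ~~ subgraphb K2_12 (half_graph n).
Proof.
apply/negP => /existsP [f /andP [/injectiveP f_inj /forallP f_edges]].
have f_half i : [set i] \in K2_12 -> f i \in lower_half n.
  move=> /(implyP (f_edges _)); rewrite imset_set1 -singletons_half_graph.
  by rewrite /singletons in_set.
have f0 : f ord0 \in lower_half n by apply: f_half; rewrite !inE eqxx.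
have f1 : f ord_max \in lower_half n by apply: f_half; rewrite !inE eqxx orbT.
have pair_K2 : [set ord0; ord_max] \in K2_12.
  have -> : [set ord0; ord_max] = [set: 'I_2].
    by apply/setP => i; rewrite !inE; case: i => [[|[|]]].
  by rewrite !inE eqxx !orbT.
move: (implyP (f_edges _) pair_K2); rewrite imsetU1 imset_set1 !inE.
case/orP => [/imsetP [v _ pair_v] | ].
  by move: (cards2 (f ord0) (f ord_max)); rewrite pair_v cards1; case: eqP => // /f_inj.
by rewrite subUset !sub1set f0 f1 andbF.
Qed.

Local Open Scope ring_scope.

Lemma h_n_half_graph_ge (R : realType) n : (2 <= n)%N -> 5 / 4 <= h_n R (half_graph n).
Proof.
move=> n_ge2; rewrite h_n_pair_hypergraph; last exact: half_graph_sizes.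
rewrite singletons_half_graph card_lower_half card_pair_edges_half_graph.
rewrite natrB ?leq_bin2l ?half_leq_n // !natr_bin2.
apply: half_split_density => //; first by rewrite (ler_nat R 2 n).
have : n%:R = (odd n)%:R + 2 * (n./2)%:R :> R.
  by rewrite -{1}(odd_double_half n) natrD -muln2 natrM mulrC.
by case: (odd n) => /= ->; ring.
Qed.

Section OneTwoHypergraph.
Variables (V : finType) (E : {set {set V}}).
Hypothesis E_R : forall k : nat, in_R E k <-> (k = 1%N \/ k = 2%N).

Lemma edge_sizes F : F \in E -> #|F| = 1%N \/ #|F| = 2%N.
Proof. by move=> F_E; apply/(E_R #|F|).1/existsP; exists F; rewrite F_E eqxx. Qed.

Lemma admissible_edge_sizes n (G : {set {set 'I_n}}) F :
  R_sub G E -> F \in G -> #|F| = 1%N \/ #|F| = 2%N.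
Proof. by move=> /forallP /(_ F) /implyP G_E /G_E /(E_R _).1. Qed.

Lemma card_vertices_gt0 : (0 < #|V|)%N.
Proof.
have [F /andP [_ /cards1P [v _]]] := existsP ((E_R 1%N).2 (or_introl erefl)).
by apply/card_gt0P; exists v.
Qed.

Lemma half_graph_admissible n : R_sub (half_graph n) E.
Proof. by apply/forallP => F; apply/implyP => /half_graph_sizes /(E_R _).2. Qed.

Lemma pi_n_ge (R : realType) n :
  subgraphb K2_12 E -> (2 <= n)%N -> 5 / 4 <= pi_n R E n.
Proof.
move=> K2_E n_ge2; apply: le_trans (h_n_half_graph_ge R n_ge2) _.
apply: (le_bigmax_cond _ (P := fun G => R_sub G E && ~~ subgraphb E G)).
rewrite half_graph_admissible /=; apply: contra (half_graph_K2_free n).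
exact: subgraphb_trans.
Qed.

Definition dense_threshold m t :=
  maxn (m + 2) (2 * (4 * m) * (kst_bound (4 * m) t + t + 1)).

Lemma subgraph_of_dense (R : realType) (A : {set V}) m n (G : {set {set 'I_n}}) :
  (forall F, F \in E -> #|F| = 2%N -> #|F :&: A| = 1%N) ->
  (0 < m)%N -> (dense_threshold m #|V| <= n)%N -> R_sub G E ->
  5 / 4 + m%:R^-1 < h_n R G -> subgraphb E G.
Proof.
move=> A_cross m_gt0 n_large G_adm G_dense.
set k := (4 * m)%N; set t := #|V|.
have /andP [n_ge T_large] : (m + 2 <= n)%N && (2 * k * (kst_bound k t + t + 1) <= n)%N.
  by rewrite -geq_max.
rewrite h_n_pair_hypergraph in G_dense; last by move=> F; apply: admissible_edge_sizes.
have many_inner : (n * n <= k * #|inner_pairs G|)%N.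
  rewrite -(ler_nat R) !natrM -expr2; rewrite natr_bin2 in G_dense.
  apply: many_inner_pairs_real G_dense; rewrite -?natr_bin2.
  - by rewrite (ler_nat R 1).
  - by rewrite -natrD ler_nat.
  - by rewrite !ler0n ler_nat -[X in (_ <= X)%N]card_ord max_card.
  - by [].
  - by rewrite -!natrD ler_nat; have := card_pair_edges G; rewrite card_ord.
pose adj y x := [set y; x] \in inner_pairs G.
have [X [Y [X_t Y_t XY_adj]]] : exists X Y : {set 'I_n},
    [/\ #|X| = t, (t <= #|Y|)%N & {in Y & X, forall y x, adj y x}].
  apply: (dense_rel_complete_bipartite (k := k)); rewrite ?card_ord //.
  - by rewrite muln_gt0.
  - exact: card_vertices_gt0.
  by apply: (leq_trans many_inner); rewrite leq_mul2l card_inner_pairs_le_deg orbT.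
have [x x_X] : exists x, x \in X by apply/card_gt0P; rewrite X_t card_vertices_gt0.
have [y y_Y] : exists y, y \in Y.
  by apply/card_gt0P; apply: leq_trans card_vertices_gt0 Y_t.
apply: (subgraph_of_complete_bipartite (A := A) (X := X) (Y := Y)) => //.
- exact: edge_sizes.
- by rewrite X_t.
- rewrite disjoints_subset; apply/subsetP => v v_X; rewrite inE.
  by apply/negP => v_Y; move: (XY_adj v v v_Y v_X); rewrite /adj (negbTE (inner_pair_neq _ _)).
- by move=> y' x' y'_Y x'_X; apply: (subsetP (inner_pairs_sub G)); apply: XY_adj.
- move=> v; rewrite inE => /orP [v_X | v_Y].
    by have /inner_pair_singletons/andP [] := XY_adj y v y_Y v_X.
  by have /inner_pair_singletons/andP [] := XY_adj v x v_Y x_X.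
Qed.

Lemma pi_n_le (R : realType) m n :
  two_graph_bipartite E -> (0 < m)%N -> (dense_threshold m #|V| <= n)%N ->
  pi_n R E n <= 5 / 4 + m%:R^-1.
Proof.
move=> [A A_cross] m_gt0 n_large; apply: bigmax_le => [|G /andP [G_adm G_free]].
  by apply: addr_ge0; rewrite ?invr_ge0 //; lra.
rewrite leNgt; apply: contra G_free; exact: subgraph_of_dense A_cross m_gt0 n_large G_adm.
Qed.

End OneTwoHypergraph.

Lemma exists_invn_le (R : archiRealFieldType) (e : R) :
  0 < e -> exists2 m, (0 < m)%N & m%:R^-1 <= e.
Proof.
move=> e_gt0; exists (Num.bound e^-1).+1 => //.
rewrite invf_ple ?posrE ?ltr0n //; apply/ltW/(lt_le_trans (archi_boundP _)).
  by rewrite invr_ge0 ltW.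
by rewrite ler_nat.
Qed.

Local Open Scope classical_set_scope.

Theorem mainTheorem8 (R : realType) (V : finType) (E : {set {set V}}) :
  (forall k : nat, in_R E k <-> (k = 1%N \/ k = 2%N)) ->
  two_graph_bipartite E ->
  subgraphb K2_12 E ->
  (fun n : nat => pi_n R E n) @ \oo --> (5 / 4 : R).
Proof.
move=> E_R E_bip K2_E; apply/cvgrPdist_le => e e_gt0.
have [m m_gt0 m_le_e] := exists_invn_le e_gt0.
apply: filterS (nbhs_infty_ge (maxn (dense_threshold m #|V|) 2)) => n.
rewrite geq_max => /andP [n_large n_ge2].
have := pi_n_ge E_R R K2_E n_ge2; have := pi_n_le E_R R E_bip m_gt0 n_large.
by rewrite ler_norml; lra.
Qed.
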